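(* Let $n\ge1$ and let $(A_1,\dots,A_n)$ be a sequence of words from $\mathsf{W}_\omega$. Then there exists a unique $n$-bounded index collection $(s_1,\dots,s_m)$ that is maximal for $(A_1,\dots,A_n)$, and $m,s_1,\dots,s_m$ are determined by the following equations on $m,s_0,s_1,\dots$: $s_0=0$; if $s_k\neq n$ then $s_{k+1}=\min\{f\mid s_k<f\le n,\ \forall l\,(s_k<l\le n\to A_l\precsim A_f)\}$; if $s_k=n$ then $s_{k+1}=n$; and $m=\min\{f\ge1\mid s_f=n\}$.
   Context: Words are finite strings over $\mathbb{N}$; $\mathsf{W}_\omega$ is the set of all words, $\Lambda$ the empty word. For $k\in\mathbb{N}$, $\mathsf{S}_k$ is the set of words all of whose symbols are $\ge k$. Given a linear preorder $\precsim$ with $A\sim B$ iff $A\precsim B\wedge B\precsim A$ and $A\prec B$ iff $A\precsim B\wedge\neg B\precsim A$, a finite sequence $(A_1,\dots,A_p)$ is lexicographically not greater than $(B_1,\dots,B_q)$ iff either $p\le q$ and $A_i\sim B_i$ for all $i\le p$, or there is $s<\min(p,q)$ with $A_i\sim B_i$ for $i\le s$ and $A_{s+1}\prec B_{s+1}$. A lexicographically maximal subsequence of a finite sequence is a subsequence that is lexicographically not less than every subsequence. The linear preorder $\precsim$ on $\mathsf{W}_\omega$ is defined by recursion on (largest symbol of $AB$) $-$ (smallest symbol of $AB$): $\Lambda\precsim\Lambda$; if $AB$ is nonempty with minimal symbol $n$, write uniquely $A=A_1n\cdots nA_k$, $B=B_1n\cdots nB_l$ ($k,l\ge1$) with $A_i,B_j\in\mathsf{S}_{n+1}$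 (possibly empty); let $C,D$ be lexicographically maximal subsequences of $(A_1,\dots,A_k)$, $(B_1,\dots,B_l)$; then $A\precsim B$ iff $C$ is lexicographically not greater than $D$. An index collection is a strictly increasing finite sequence of positive integers; it is $n$-bounded if all its entries are $\le n$. An $n$-bounded index collection $(s_1,\dots,s_m)$ is maximal for $(A_1,\dots,A_n)$ if $(A_{s_1},\dots,A_{s_m})$ is a lexicographically maximal subsequence of $(A_1,\dots,A_n)$. *)

From mathcomp Require Import all_boot.
Set Implicit Arguments. Unset Strict Implicit. Unset Printing Implicit Defensive.

Definition word := seq nat.

Definition minw (w : word) : nat := foldr minn (head 0 w) w.
Definition maxw (w : word) : nat := foldr maxn 0 w.

(* Split a word at every occurrence of symbol n:
   A = A_1 n A_2 n ... n A_k  gives [:: A_1; ...; A_k]  (k >= 1). *)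
Fixpoint split_on (n : nat) (A : word) : seq word :=
  match A with
  | [::] => [:: [::]]
  | x :: s =>
      let r := split_on n s in
      if x == n then [::] :: r
      else match r with
           | t :: r' => (x :: t) :: r'
           | [::] => [:: [:: x]]
           end
  end.

(* Lexicographic "not greater than" on finite sequences, w.r.t. a preorder le
   (with  a ~ b := le a b /\ le b a  and  a < b := le a b /\ ~ le b a). *)
Fixpoint lexle {T : Type} (le : T -> T -> Prop) (C D : seq T) : Prop :=
  match C, D with
  | [::], _ => True
  | _ :: _, [::] => False
  | a :: C', b :: D' =>
      (le a b /\ ~ le b a) \/ (le a b /\ le b a /\ lexle le C' D')
  end.

Definition is_lexmax {T : eqType} (le : T -> T -> Prop) (S C : seq T) : Prop :=
  subseq C S /\ forall D, subseq D S -> lexle le D C.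

Fixpoint wle_f (k : nat) (A B : word) : Prop :=
  match k with
  | 0 => True
  | k'.+1 =>
      match A ++ B with
      | [::] => True
      | _ :: _ =>
          let n := minw (A ++ B) in
          exists C D,
            is_lexmax (wle_f k') (split_on n A) C /\
            is_lexmax (wle_f k') (split_on n B) D /\
            lexle (wle_f k') C D
      end
  end.

(* The linear preorder on W_omega (fuel = (max - min of AB) + 1 suffices). *)
Definition wle (A B : word) : Prop :=
  wle_f (maxw (A ++ B) - minw (A ++ B)).+1 A B.

(* 1-based access A_i of a sequence (A_1, ..., A_n). *)
Definition At (As : seq word) (i : nat) : word := nth [::] As i.-1.

Definition index_coll (n : nat) (s : seq nat) : Prop :=
  sorted ltn s /\ all (fun i => 0 < i) s /\ all (fun i => i <= n) s.

Definition max_ic (n : nat) (As : seq word) (s : seq nat) : Prop :=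
  index_coll n s /\ is_lexmax wle As [seq At As i | i <- s].

Definition is_min (P : nat -> Prop) (x : nat) : Prop :=
  P x /\ forall y, P y -> x <= y.

(* The equations on m, s_0, s_1, ... of the statement (t k = s_k). *)
Definition gen_eqs (n : nat) (As : seq word) (t : nat -> nat) (m : nat) : Prop :=
  t 0 = 0 /\
  (forall k, t k <> n ->
     is_min (fun f => t k < f <= n /\
               forall l, t k < l <= n -> wle (At As l) (At As f)) (t k.+1)) /\
  (forall k, t k = n -> t k.+1 = n) /\
  is_min (fun f => 1 <= f /\ t f = n) m.

From Stdlib Require Import Classical IndefiniteDescription.
From mathcomp Require Import all_boot zify.
Set Implicit Arguments. Unset Strict Implicit. Unset Printing Implicit Defensive.

(* Two facts combine.  First, wle is a total preorder: on words with symbols in [a, b],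
   comparing at fuel k+1 means comparing lexicographically maximal subsequences of the
   pieces cut out by the symbol a, which have symbols in [a+1, b]; by induction on b - a,
   wle_f is independent of the fuel beyond b + 1 - a and is a total preorder there.
   Second, for any total preorder, a lexicographically maximal index collection above j
   must start with the first index f > j of a maximal entry: a head whose entry is not
   maximal is beaten by [A_f], and a later head is beaten by the same sequence with f
   prepended.  Its tail is then maximal above f, so the greedy sequence s_1, ..., s_m is
   the unique maximal index collection. *)

Definition total_preorder_on (T : Type) (P : T -> Prop) (le : T -> T -> Prop) :=
  [/\ forall x, P x -> le x x,
      forall x y z, P x -> P y -> P z -> le x y -> le y z -> le x z
    & forall x y, P x -> P y -> le x y \/ le y x].

Lemma in_cons_inv (T : eqType) (P : T -> Prop) x (s : seq T) :
  {in x :: s, forall y, P y} -> P x /\ {in s, forall y, P y}.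
Proof. by move=> Ps; split=> [|y ys]; apply: Ps; rewrite inE ?eqxx ?ys ?orbT. Qed.

Section LexCongruence.
Variables (T : eqType) (P : T -> Prop) (le1 le2 : T -> T -> Prop).
Hypothesis le12 : forall x y, P x -> P y -> (le1 x y <-> le2 x y).

Lemma lexle_cong C D : {in C, forall x, P x} -> {in D, forall x, P x} ->
  lexle le1 C D <-> lexle le2 C D.
Proof.
elim: C D => [|x C IH] [|y D] //= /in_cons_inv[Px PC] /in_cons_inv[Py PD].
by rewrite (le12 Px Py) (le12 Py Px) (IH D PC PD).
Qed.

Lemma lexmax_cong S C : {in S, forall x, P x} ->
  is_lexmax le1 S C <-> is_lexmax le2 S C.
Proof.
move=> PS; have PD D : subseq D S -> {in D, forall x, P x}.
  by move=> /mem_subseq sDS; apply: sub_in1 PS.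
by split=> -[sCS Cmax]; split=> // D sDS; apply/(lexle_cong (PD _ sDS) (PD _ sCS));
  apply: Cmax.
Qed.

Lemma total_preorder_on_cong : total_preorder_on P le1 -> total_preorder_on P le2.
Proof.
case=> refl trans total; split.
- by move=> x Px; apply/le12/refl.
- by move=> x y z Px Py Pz /le12-/(_ Px Py) xy /le12-/(_ Py Pz) yz;
    apply/le12/(trans x y z).
- by move=> x y Px Py; case: (total x y Px Py) => /le12 h; [left|right]; apply: h.
Qed.

End LexCongruence.

Lemma lexmax_seq1 (T : eqType) (le : T -> T -> Prop) x C :
  is_lexmax le [:: x] C -> C = [:: x].
Proof.
case=> sCx /(_ [:: x] (subseq_refl _)).
case: C sCx => [|c [|c' C]] //=; first by case: ifP => // /eqP->.
by case: ifP => // /eqP-> /eqP.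
Qed.

Lemma lexle_seq1 (T : Type) (le : T -> T -> Prop) x y :
  lexle le [:: x] [:: y] <-> le x y.
Proof. by rewrite /=; split=> [|xy]; [tauto | case: (classic (le y x)); tauto]. Qed.

Section LexOrder.
Variables (T : eqType) (P : T -> Prop) (le : T -> T -> Prop).
Hypothesis le_total_preorder : total_preorder_on P le.

Lemma le_refl_on x : P x -> le x x.
Proof. by case: le_total_preorder => refl _ _; apply: refl. Qed.

Lemma le_trans_on x y z : P x -> P y -> P z -> le x y -> le y z -> le x z.
Proof. by case: le_total_preorder => _ trans _; apply: trans. Qed.

Lemma le_total_on x y : P x -> P y -> le x y \/ le y x.
Proof. by case: le_total_preorder => _ _; apply. Qed.

Lemma lexle_refl C : {in C, forall x, P x} -> lexle le C C.
Proof.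
elim: C => //= x C IH /in_cons_inv[Px PC].
by right; split; [|split]; [apply: le_refl_on..|apply: IH].
Qed.

Lemma lexle_trans C D E : {in C, forall x, P x} -> {in D, forall x, P x} ->
  {in E, forall x, P x} -> lexle le C D -> lexle le D E -> lexle le C E.
Proof.
elim: C D E => [|x C IH] [|y D] [|z E] //=; try tauto.
move=> /in_cons_inv[Px PC] /in_cons_inv[Py PD] /in_cons_inv[Pz PE].
have le_xz := le_trans_on Px Py Pz.
move=> [[xy Nyx]|[xy [yx CD]]] [[yz Nzy]|[yz [zy DE]]].
- by left; split; [exact: le_xz | move=> /(le_trans_on Py Pz Px yz)].
- by left; split; [exact: le_xz | move=> /(le_trans_on Py Pz Px yz)].
- by left; split=> [|zx]; [exact: le_xz | apply/Nzy/(le_trans_on Pz Px Py zx xy)].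
- right; split; [exact: le_xz | split; last exact: IH CD DE].
  exact: le_trans_on Pz Py Px zy yx.
Qed.

Lemma lexle_total C D : {in C, forall x, P x} -> {in D, forall x, P x} ->
  lexle le C D \/ lexle le D C.
Proof.
elim: C D => [|x C IH] [|y D] /=; try tauto.
move=> /in_cons_inv[Px PC] /in_cons_inv[Py PD].
case: (classic (le x y)) => xy; case: (classic (le y x)) => yx; try tauto.
- by case: (IH D PC PD); tauto.
- by case: (le_total_on Px Py); tauto.
Qed.

Lemma not_lexle_cons_upper c v : P c -> {in v, forall x, P x} ->
  {in v, forall x, le x c} -> ~ lexle le (c :: v) v.
Proof.
elim: v c => [|d v IH] c Pc; first by move=> _ _ [].
move=> /in_cons_inv[Pd Pv] /in_cons_inv[dc vc] /=.
move=> [[_ Ndc]|[cd [_ dvv]]]; first exact: Ndc.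
apply: (IH d Pd Pv _ dvv) => x xv; exact: le_trans_on (Pv x xv) Pc Pd (vc x xv) cd.
Qed.

End LexOrder.

Lemma index_coll_subseq_iota n u : index_coll n u <-> subseq u (iota 1 n).
Proof.
split=> [[u_sorted [/allP u_pos /allP u_le]]|sub_u].
  have -> : u = [seq i <- iota 1 n | i \in u].
    apply: (irr_sorted_eq ltn_trans ltnn) => //.
      by apply: (sorted_filter ltn_trans); apply: iota_ltn_sorted.
    move=> i; rewrite mem_filter mem_iota; case iu: (i \in u) => //.
    by rewrite add1n ltnS u_pos ?u_le.
  exact: filter_subseq.
split; first by apply: (subseq_sorted ltn_trans sub_u); apply: iota_ltn_sorted.
by split; apply/allP=> i /(mem_subseq sub_u); rewrite mem_iota add1n ltnS => /andP[].
Qed.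

Lemma map_At_iota S : [seq At S i | i <- iota 1 (size S)] = S.
Proof.
by rewrite -(addn0 1) iotaDl -map_comp -[RHS](mkseq_nth [::] S).
Qed.

Lemma subseq_map_At S u : index_coll (size S) u -> subseq [seq At S i | i <- u] S.
Proof.
by move=> /index_coll_subseq_iota /(map_subseq (At S)); rewrite map_At_iota.
Qed.

Lemma subseq_map_AtP S D : subseq D S ->
  exists2 u, index_coll (size S) u & D = [seq At S i | i <- u].
Proof.
rewrite -{1}(map_At_iota S) => /subseqP[m _ ->].
exists (mask m (iota 1 (size S))); last by rewrite map_mask.
exact/index_coll_subseq_iota/mask_subseq.
Qed.

Lemma classic_ex_min (Q : nat -> Prop) : (exists x, Q x) -> exists x, is_min Q x.
Proof.
move=> [x Qx]; apply: NNPP => no_min; elim/ltn_ind: x Qx => x IH Qx.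
apply: no_min; exists x; split=> // y Qy.
by case: (leqP x y) => // yx; case: (IH y yx Qy).
Qed.

Lemma down_ind (m : nat) (Q : nat -> Prop) :
  Q m -> (forall k, k < m -> Q k.+1 -> Q k) -> forall k, k <= m -> Q k.
Proof.
move=> Qm Qstep k km; move Ed: (m - k) => d.
elim: d k km Ed => [|d IH] k km Ed; first by have -> : k = m by lia.
by apply: Qstep; [lia | apply: IH; lia].
Qed.

Definition index_coll_above (n j : nat) (u : seq nat) : Prop :=
  path ltn j u /\ all (fun i => i <= n) u.

Lemma index_coll_above0 n u : index_coll n u <-> index_coll_above n 0 u.
Proof.
rewrite /index_coll /index_coll_above (path_sortedE ltn_trans).
by split=> [[-> [-> ->]]|[/andP[-> ->] ->]].
Qed.

Lemma index_coll_above_weaken n i j u :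
  i <= j -> index_coll_above n j u -> index_coll_above n i u.
Proof.
case: u => [|a u] // ij [/andP[ja au] u_le]; split=> //.
by apply/andP; split=> //; apply: leq_ltn_trans ij ja.
Qed.

Lemma index_coll_above_mem n j u i : index_coll_above n j u -> i \in u -> j < i <= n.
Proof.
rewrite /index_coll_above (path_sortedE ltn_trans) => -[/andP[/allP u_gt _] /allP u_le] iu.
by rewrite u_gt ?u_le.
Qed.

Lemma index_coll_above_n n u : index_coll_above n n u -> u = [::].
Proof. by case: u => [|a u] //= [/andP[na _] /andP[an _]]; lia. Qed.

Definition greedy_next (le : word -> word -> Prop) (n : nat) (As : seq word) (j f : nat) :=
  is_min (fun f => j < f <= n /\
            forall l, j < l <= n -> le (At As l) (At As f)) f.

Definition gen_eqs_for (le : word -> word -> Prop) (n : nat) (As : seq word)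
    (t : nat -> nat) (m : nat) : Prop :=
  t 0 = 0 /\
  (forall k, t k <> n -> greedy_next le n As (t k) (t k.+1)) /\
  (forall k, t k = n -> t k.+1 = n) /\
  is_min (fun f => 1 <= f /\ t f = n) m.

Section Greedy.
Variables (P : word -> Prop) (le : word -> word -> Prop) (S : seq word).
Hypotheses (le_tp : total_preorder_on P le) (P_nil : P [::]) (PS : {in S, forall x, P x}).

Local Notation n := (size S).
Local Notation A := (At S).
Local Notation next := (greedy_next le n S).

Lemma P_At i : P (A i).
Proof.
rewrite /At; case: (ltnP i.-1 n) => i_lt; first by apply/PS/mem_nth.
by rewrite nth_default.
Qed.

Lemma P_map u : {in [seq A i | i <- u], forall x, P x}.
Proof. by move=> _ /mapP[i _ ->]; apply: P_At. Qed.

Lemma le_refl_At i : le (A i) (A i).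
Proof. exact: (le_refl_on le_tp (P_At i)). Qed.

Lemma le_trans_At i j k : le (A i) (A j) -> le (A j) (A k) -> le (A i) (A k).
Proof. exact: (le_trans_on le_tp (P_At i) (P_At j) (P_At k)). Qed.

Lemma ex_argmax_At j e : j < e ->
  exists f, j < f <= e /\ forall l, j < l <= e -> le (A l) (A f).
Proof.
elim: e => [//|e IH] je; case: (ltnP j e) => [je'|ej]; last first.
  exists e.+1; split=> [|l jl]; first lia.
  by have -> : l = e.+1 by [lia]; apply: le_refl_At.
have [f [jf f_max]] := IH je'.
case: (le_total_on le_tp (P_At e.+1) (P_At f)) => [e_le_f|f_le_e].
- exists f; split=> [|l jl]; first lia.
  by case: (ltnP e l) => el; [have -> : l = e.+1 by [lia] | apply: f_max; lia].
- exists e.+1; split=> [|l jl]; first lia.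
  case: (ltnP e l) => el; first by have -> : l = e.+1 by [lia]; apply: le_refl_At.
  by apply: le_trans_At f_le_e; apply: f_max; lia.
Qed.

Lemma greedy_exists : 0 < n -> exists t m, gen_eqs_for le n S t m.
Proof.
move=> n_pos.
have next_ex j : exists f, (j < n -> next j f) /\ (n <= j -> f = n).
  case: (ltnP j n) => jn; last by exists n; split=> //; lia.
  by have [f f_min] := classic_ex_min (ex_argmax_At jn); exists f; split=> //; lia.
have [g gP] := functional_choice _ next_ex.
pose t k := iter k g 0.
have t_le k : t k <= n.
  elim: k => [|k IH] //=; have [g_next g_end] := gP (t k).
  by case: (ltnP (t k) n) => [/g_next[[/andP[_ ->]]]|/g_end ->].
have t_grow k : k <= t k \/ t k = n.
  elim: k => [|k IH] /=; first by left.
  have [g_next g_end] := gP (t k).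
  case: (ltnP (t k) n) => [/g_next[[/andP[tk _] _] _]|/g_end]; [left; lia | by right].
have t_n : t n = n by case: (t_grow n) => // h; have := t_le n; lia.
have [m m_min] := classic_ex_min (ex_intro (fun f => 1 <= f /\ t f = n) n (conj n_pos t_n)).
exists t, m; split=> //; split=> [k tk|]; last split=> // k tk.
- by apply: (gP (t k)).1; have := t_le k; lia.
- by apply: (gP (t k)).2; lia.
Qed.

Section GreedyRun.
Variables (t : nat -> nat) (m : nat).
Hypotheses (n_pos : 0 < n) (t_eqs : gen_eqs_for le n S t m).

Lemma greedy_start : t 0 = 0. Proof. by case: t_eqs. Qed.

Lemma greedy_end : t m = n. Proof. by case: t_eqs => _ [_ [_ [[_ ->]]]]. Qed.

Lemma greedy_le_n k : t k <= n.
Proof.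
case: t_eqs => t0 [t_next [t_stop _]].
elim: k => [|k IH]; first by rewrite t0.
by case: (eqVneq (t k) n) => [/t_stop ->|/eqP/t_next[[/andP[_ ->]]]].
Qed.

Lemma greedy_lt_n k : k < m -> t k < n.
Proof.
case: t_eqs => t0 [_ [_ [_ m_min]]] km.
case: (eqVneq (t k) n) => tk; last by have := greedy_le_n k; lia.
case: k km tk => [|k] km tk; first by rewrite t0 in tk; lia.
by have := m_min k.+1 (conj isT tk); lia.
Qed.

Lemma greedy_step k : k < m -> next (t k) (t k.+1).
Proof.
by case: t_eqs => _ [t_next _] /greedy_lt_n tk; apply: t_next; lia.
Qed.

Definition greedy_tail k := [seq t i | i <- iota k.+1 (m - k)].

Lemma greedy_tail_step k : k < m -> greedy_tail k = t k.+1 :: greedy_tail k.+1.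
Proof. by move=> km; rewrite /greedy_tail (_ : m - k = (m - k.+1).+1) //; lia. Qed.

Lemma greedy_tail0 : [seq t i | i <- iota 1 m] = greedy_tail 0.
Proof. by rewrite /greedy_tail subn0. Qed.

Lemma greedy_tail_end : greedy_tail m = [::].
Proof. by rewrite /greedy_tail subnn. Qed.

Lemma greedy_tail_index_coll k : k <= m -> index_coll_above n (t k) (greedy_tail k).
Proof.
move: k; apply: down_ind => [|k km [tail_path tail_le]].
  by rewrite greedy_tail_end.
have [[/andP[lt_next next_le] _] _] := greedy_step km.
by rewrite greedy_tail_step //; split; apply/andP.
Qed.

Lemma greedy_tail_upper k : k <= m -> forall u, index_coll_above n (t k) u ->
  lexle le [seq A i | i <- u] [seq A i | i <- greedy_tail k].
Proof.
move: k; apply: down_ind => [|k km IH] u; first by rewrite greedy_end => /index_coll_above_n->.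
rewrite greedy_tail_step //; case: u => [|a u] //= [/andP[ka u_path] /andP[an u_le]].
have [[_ next_max] next_min] := greedy_step km.
have a_le_next : le (A a) (A (t k.+1)) by apply: next_max; apply/andP.
case: (classic (le (A (t k.+1)) (A a))) => next_le_a; last by left.
have next_a : t k.+1 <= a.
  apply: next_min; split=> [|l kl]; first exact/andP.
  exact: le_trans_At (next_max l kl) next_le_a.
by right; do 2 split=> //; apply/IH/(index_coll_above_weaken next_a).
Qed.

Lemma index_coll_above1 j i : j < i <= n -> index_coll_above n j [:: i].
Proof. by case/andP=> ji i_n; split; rewrite /= ?ji ?i_n. Qed.

Lemma greedy_tail_head k a u : k < m -> index_coll_above n (t k) (a :: u) ->
  (forall w, index_coll_above n (t k) w ->
     lexle le [seq A i | i <- w] [seq A i | i <- a :: u]) ->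
  a = t k.+1.
Proof.
move=> km au_coll au_max.
have [[k_next next_max] next_min] := greedy_step km.
have ka : t k < a <= n by apply: index_coll_above_mem au_coll (mem_head a u).
have le_a l : t k < l <= n -> le (A l) (A a).
  by move=> kl; have /= := au_max _ (index_coll_above1 kl); tauto.
have next_a : t k.+1 <= a by apply: next_min.
apply/eqP; rewrite eqn_leq next_a andbT leqNgt; apply/negP => next_lt_a.
have next_au_coll : index_coll_above n (t k) (t k.+1 :: a :: u).
  case: au_coll k_next => /= /andP[_ au_path] au_le /andP[k_lt_next next_n].
  by split; rewrite /= ?k_lt_next ?next_lt_a ?au_path ?next_n.
have au_le_next : {in [seq A i | i <- a :: u], forall x, le x (A (t k.+1))}.
  move=> _ /mapP[i iau ->]; apply: (le_trans_At (le_a _ _)); last exact: next_max.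
  exact: index_coll_above_mem au_coll iau.
apply: (not_lexle_cons_upper le_tp (P_At (t k.+1)) (@P_map (a :: u)) au_le_next).
exact: au_max next_au_coll.
Qed.

Lemma greedy_tail_unique k : k <= m -> forall u, index_coll_above n (t k) u ->
  (forall w, index_coll_above n (t k) w ->
     lexle le [seq A i | i <- w] [seq A i | i <- u]) ->
  u = greedy_tail k.
Proof.
move: k; apply: down_ind => [|k km IH] u u_coll u_max.
  by rewrite greedy_end in u_coll; rewrite greedy_tail_end (index_coll_above_n u_coll).
have [[k_next _] _] := greedy_step km.
rewrite greedy_tail_step //; case: u u_coll u_max => [|a u] u_coll u_max.
  by have := u_max _ (index_coll_above1 k_next).
have a_next := greedy_tail_head km u_coll u_max; subst a.
congr (_ :: _); apply: IH.
  by case: u_coll => /= /andP[_ u_path] /andP[_ u_le].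
move=> w [w_path w_le].
have next_w_coll : index_coll_above n (t k) (t k.+1 :: w).
  by case/andP: k_next => k_lt_next next_n; split; apply/andP.
have /= [[_ Nle]|[_ [_ //]]] := u_max _ next_w_coll.
by case: Nle; apply: le_refl_At.
Qed.

Lemma greedy_max_ic :
  index_coll n [seq t i | i <- iota 1 m] /\
  is_lexmax le S [seq A i | i <- [seq t i | i <- iota 1 m]].
Proof.
have coll0 := greedy_tail_index_coll (leq0n m); rewrite greedy_start in coll0.
rewrite greedy_tail0; split; first exact/index_coll_above0.
split; first exact/subseq_map_At/index_coll_above0.
move=> D /subseq_map_AtP[u /index_coll_above0 u_coll ->].
by apply: greedy_tail_upper; rewrite ?greedy_start.
Qed.

Lemma greedy_max_ic_unique s :
  index_coll n s /\ is_lexmax le S [seq A i | i <- s] ->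
  s = [seq t i | i <- iota 1 m].
Proof.
move=> [/index_coll_above0 s_coll [_ s_max]].
rewrite greedy_tail0.
apply: greedy_tail_unique; rewrite ?greedy_start // => w /index_coll_above0 w_coll.
exact/s_max/subseq_map_At.
Qed.

End GreedyRun.

Theorem greedy_max_ic_spec : 0 < n ->
  (exists! s, index_coll n s /\ is_lexmax le S [seq A i | i <- s]) /\
  (exists t m, gen_eqs_for le n S t m) /\
  (forall s t m, index_coll n s /\ is_lexmax le S [seq A i | i <- s] ->
     gen_eqs_for le n S t m -> s = [seq t i | i <- iota 1 m]).
Proof.
move=> n_pos; have [t [m t_eqs]] := greedy_exists n_pos.
split; last split; [|by exists t, m|].
- exists [seq t i | i <- iota 1 m]; split; first exact: greedy_max_ic t_eqs.
  by move=> s /(greedy_max_ic_unique n_pos t_eqs) ->.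
- by move=> s t' m' s_max t'_eqs; apply: (greedy_max_ic_unique n_pos t'_eqs s_max).
Qed.

Lemma lexmax_exists : exists C, is_lexmax le S C.
Proof.
case: (posnP n) => [n0|n_pos].
  exists [::]; split=> [|D]; first exact: sub0seq.
  move/eqP: n0; rewrite size_eq0 => /eqP->.
  by rewrite subseq0 => /eqP->.
have [t [m t_eqs]] := greedy_exists n_pos.
by eexists; apply: (greedy_max_ic n_pos t_eqs).2.
Qed.

End Greedy.

Lemma foldr_minn_le x (w : seq nat) y : y \in w -> foldr minn x w <= y.
Proof.
elim: w => [|z w IH] //=; rewrite inE => /orP[/eqP->|/IH]; first exact: geq_minl.
exact: leq_trans (geq_minr _ _).
Qed.

Lemma leq_foldr_minn a x (w : seq nat) :
  a <= x -> all (leq a) w -> a <= foldr minn x w.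
Proof. by move=> ax; elim: w => //= z w IH /andP[az /IH aw]; rewrite leq_min az. Qed.

Lemma minw_le (w : word) y : y \in w -> minw w <= y.
Proof. exact: foldr_minn_le. Qed.

Lemma minw_eq a (w : word) : a \in w -> all (leq a) w -> minw w = a.
Proof.
move=> aw a_le; apply/eqP; rewrite eqn_leq minw_le //=.
case: w aw a_le => // z w _ a_le.
by apply: leq_foldr_minn (a_le); case/andP: a_le.
Qed.

Lemma maxw_ge (w : word) y : y \in w -> y <= maxw w.
Proof. by move=> yw; rewrite /maxw foldrE; apply: (leq_bigmax_seq (F := id)). Qed.

Lemma maxw_le (w : word) M : (forall y, y \in w -> y <= M) -> maxw w <= M.
Proof. by move=> w_le; rewrite /maxw foldrE; apply/bigmax_leqP_seq => y /w_le. Qed.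

Lemma mem_split_on n (A Y : word) y :
  Y \in split_on n A -> y \in Y -> (y \in A) && (y != n).
Proof.
elim: A Y => [|x A IH] Y /=; first by rewrite inE => /eqP->.
have IH' Z : Z \in split_on n A -> y \in Z -> (y \in x :: A) && (y != n).
  by move=> ZA yZ; case/andP: (IH Z ZA yZ) => yA ->; rewrite inE yA orbT.
case: eqP => [_|xn]; first by rewrite inE => /orP[/eqP->|/IH'].
case: (split_on n A) IH' => [|Z r] IH'.
  by rewrite inE => /eqP->; rewrite inE => /eqP->; rewrite mem_head; apply/eqP.
rewrite inE => /orP[/eqP->|YZr]; last by apply: IH'; rewrite inE YZr orbT.
rewrite inE => /orP[/eqP->|yZ]; last exact: IH' (mem_head Z r) yZ.
by rewrite mem_head; apply/eqP.
Qed.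

Lemma split_on_notin n (A : word) : n \notin A -> split_on n A = [:: A].
Proof.
elim: A => [|x A IH] //=; rewrite inE negb_or => /andP[nx /IH->].
by rewrite eq_sym (negbTE nx).
Qed.

Definition bounded (a b : nat) (X : word) : Prop := all (fun y => a <= y <= b) X.

Lemma bounded_nil a b X : b < a -> bounded a b X -> X = [::].
Proof. by case: X => [|y X] //= ba /andP[/andP[ay yb] _]; lia. Qed.

Lemma bounded_split_on a b X :
  bounded a b X -> {in split_on a X, forall Y, bounded a.+1 b Y}.
Proof.
move=> /allP X_bd Y YX; apply/allP => y yY.
have /andP[yX /eqP ya] := mem_split_on YX yY.
by have := X_bd y yX; lia.
Qed.

Lemma lexmax_split_on_bounded le a b X C : bounded a b X ->
  is_lexmax le (split_on a X) C -> {in C, forall Y, bounded a.+1 b Y}.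
Proof. by move=> X_bd [/mem_subseq CX _] Y /CX; exact: (bounded_split_on X_bd). Qed.

Lemma wle_f_nil k : wle_f k [::] [::].
Proof. by case: k. Qed.

Definition wle_f_regular (a b : nat) : Prop :=
  (forall k1 k2, b.+1 - a <= k1 -> b.+1 - a <= k2 -> forall X Y,
     bounded a b X -> bounded a b Y -> (wle_f k1 X Y <-> wle_f k2 X Y)) /\
  (forall k, b.+1 - a <= k -> total_preorder_on (bounded a b) (wle_f k)).

Lemma wle_f_regular_empty a b : b < a -> wle_f_regular a b.
Proof.
move=> ba; have nil := bounded_nil ba; split=> [k1 k2 _ _ X Y /nil-> /nil->|k _].
  by split=> _; apply: wle_f_nil.
split=> [X /nil->|X Y Z /nil-> _ /nil-> _ _|X Y /nil-> /nil->]; last left;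
  exact: wle_f_nil.
Qed.

Section RegularStep.
Variables a b : nat.
Hypotheses (a_le_b : a <= b) (regular_above : wle_f_regular a.+1 b).

Lemma wle_f_above_tp k : b - a <= k -> total_preorder_on (bounded a.+1 b) (wle_f k).
Proof. by move=> k_ge; apply: regular_above.2; rewrite subSS. Qed.

Lemma split_on_lexmax_exists k X : b - a <= k -> bounded a b X ->
  exists C, is_lexmax (wle_f k) (split_on a X) C.
Proof.
move=> k_ge X_bd; apply: (lexmax_exists (wle_f_above_tp k_ge)) => //.
exact: bounded_split_on.
Qed.

Lemma wle_f_succ_lexle k X Y C D : b - a <= k -> bounded a b X -> bounded a b Y ->
  is_lexmax (wle_f k) (split_on a X) C -> is_lexmax (wle_f k) (split_on a Y) D ->
  wle_f k.+1 X Y <-> lexle (wle_f k) C D.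
Proof.
move=> k_ge X_bd Y_bd C_max D_max.
have tp := wle_f_above_tp k_ge.
have C_bd := lexmax_split_on_bounded X_bd C_max.
have D_bd := lexmax_split_on_bounded Y_bd D_max.
case: (boolP (a \in X ++ Y)) => aXY.
  have XY_bd : bounded a b (X ++ Y) by rewrite /bounded all_cat; apply/andP.
  have min_XY : minw (X ++ Y) = a.
    by apply: minw_eq aXY _; apply: sub_all XY_bd => y /andP[].
  rewrite /=; move: min_XY aXY; case: (X ++ Y) => [|z w] //= -> _.
  split=> [[C' [D' [C'_max [D'_max C'D']]]]|CD].
    have C'_bd := lexmax_split_on_bounded X_bd C'_max.
    have D'_bd := lexmax_split_on_bounded Y_bd D'_max.
    apply: (lexle_trans tp C_bd C'_bd D_bd (C'_max.2 C C_max.1)).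
    exact: (lexle_trans tp C'_bd D'_bd D_bd C'D' (D_max.2 D' D'_max.1)).
  by exists C, D.
rewrite mem_cat negb_or in aXY; case/andP: aXY => aX aY.
rewrite (split_on_notin aX) in C_max; rewrite (split_on_notin aY) in D_max.
rewrite (lexmax_seq1 C_max) (lexmax_seq1 D_max) lexle_seq1.
have above Z : bounded a b Z -> a \notin Z -> bounded a.+1 b Z.
  move=> Z_bd aZ; have := bounded_split_on Z_bd; rewrite split_on_notin //.
  by apply; apply: mem_head.
by apply: regular_above.1; rewrite ?subSS; [lia | lia | exact: above | exact: above].
Qed.

Lemma wle_f_fuel_indep k1 k2 X Y : b - a <= k1 -> b - a <= k2 ->
  bounded a b X -> bounded a b Y -> wle_f k1.+1 X Y <-> wle_f k2.+1 X Y.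
Proof.
move=> k1_ge k2_ge X_bd Y_bd.
have [C C_max] := split_on_lexmax_exists k1_ge X_bd.
have [D D_max] := split_on_lexmax_exists k1_ge Y_bd.
have le12 Z W : bounded a.+1 b Z -> bounded a.+1 b W -> (wle_f k1 Z W <-> wle_f k2 Z W).
  by move=> Z_bd W_bd; apply: regular_above.1; rewrite // subSS.
have C_max2 := (lexmax_cong le12 C (bounded_split_on X_bd)).1 C_max.
have D_max2 := (lexmax_cong le12 D (bounded_split_on Y_bd)).1 D_max.
rewrite (wle_f_succ_lexle k1_ge X_bd Y_bd C_max D_max).
rewrite (wle_f_succ_lexle k2_ge X_bd Y_bd C_max2 D_max2).
exact: (lexle_cong le12 (lexmax_split_on_bounded X_bd C_max)
                        (lexmax_split_on_bounded Y_bd D_max)).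
Qed.

Lemma wle_f_succ_total_preorder k : b - a <= k ->
  total_preorder_on (bounded a b) (wle_f k.+1).
Proof.
move=> k_ge; have tp := wle_f_above_tp k_ge.
have lexmax_bd X : bounded a b X -> exists2 C, is_lexmax (wle_f k) (split_on a X) C &
    {in C, forall Y, bounded a.+1 b Y}.
  move=> X_bd; have [C C_max] := split_on_lexmax_exists k_ge X_bd.
  by exists C => //; apply: lexmax_split_on_bounded X_bd C_max.
split=> [X X_bd|X Y Z X_bd Y_bd Z_bd|X Y X_bd Y_bd].
- have [C C_max C_bd] := lexmax_bd X X_bd.
  by apply/(wle_f_succ_lexle k_ge X_bd X_bd C_max C_max)/(lexle_refl tp C_bd).
- have [C C_max C_bd] := lexmax_bd X X_bd; have [D D_max D_bd] := lexmax_bd Y Y_bd.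
  have [E E_max E_bd] := lexmax_bd Z Z_bd.
  rewrite (wle_f_succ_lexle k_ge X_bd Y_bd C_max D_max).
  rewrite (wle_f_succ_lexle k_ge Y_bd Z_bd D_max E_max).
  rewrite (wle_f_succ_lexle k_ge X_bd Z_bd C_max E_max).
  exact: (lexle_trans tp C_bd D_bd E_bd).
- have [C C_max C_bd] := lexmax_bd X X_bd; have [D D_max D_bd] := lexmax_bd Y Y_bd.
  rewrite (wle_f_succ_lexle k_ge X_bd Y_bd C_max D_max).
  rewrite (wle_f_succ_lexle k_ge Y_bd X_bd D_max C_max).
  exact: (lexle_total tp C_bd D_bd).
Qed.

Lemma wle_f_regular_step : wle_f_regular a b.
Proof.
split=> [[|k1] [|k2] k1_ge k2_ge|[|k] k_ge]; try lia.
  have k1_ge' : b - a <= k1 by lia.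
  have k2_ge' : b - a <= k2 by lia.
  by move=> X Y; apply: wle_f_fuel_indep.
have k_ge' : b - a <= k by lia.
exact: wle_f_succ_total_preorder.
Qed.

End RegularStep.

Lemma wle_f_regular_all a b : wle_f_regular a b.
Proof.
move Ed: (b.+1 - a) => d; elim: d a Ed => [|d IH] a Ed.
  by apply: wle_f_regular_empty; lia.
case: (ltnP b a) => [ba|ab]; first exact: wle_f_regular_empty.
by apply: wle_f_regular_step => //; apply: IH; lia.
Qed.

Lemma wle_f_bounded_wle M X Y : bounded 0 M X -> bounded 0 M Y ->
  wle_f M.+1 X Y <-> wle X Y.
Proof.
move=> X_bd Y_bd; rewrite /wle.
have XY_le y : y \in X ++ Y -> y <= M.
  by rewrite mem_cat => /orP[] yZ; [move/allP: X_bd | move/allP: Y_bd] => /(_ y yZ).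
have max_le := maxw_le XY_le.
have bd Z : {subset Z <= X ++ Y} -> bounded (minw (X ++ Y)) (maxw (X ++ Y)) Z.
  by move=> ZXY; apply/allP => y /ZXY yXY; rewrite minw_le ?maxw_ge.
apply: (wle_f_regular_all (minw (X ++ Y)) (maxw (X ++ Y))).1; try lia; apply: bd.
- by move=> y yX; rewrite mem_cat yX.
- by move=> y yY; rewrite mem_cat yY orbT.
Qed.

Lemma wle_total_preorder M : total_preorder_on (bounded 0 M) wle.
Proof.
apply: (total_preorder_on_cong (@wle_f_bounded_wle M)).
by apply: (wle_f_regular_all 0 M).2; rewrite subn0.
Qed.

Theorem lemma1 (n : nat) (As : seq word) :
  1 <= n -> size As = n ->
  (exists! s, max_ic n As s) /\
  (exists t m, gen_eqs n As t m) /\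
  (forall s t m, max_ic n As s -> gen_eqs n As t m ->
                 s = [seq t i | i <- iota 1 m]).
Proof.
move=> n_pos size_As; subst n; set M := maxw (flatten As).
have As_bd : {in As, forall X, bounded 0 M X}.
  by move=> X XAs; apply/allP => y yX; rewrite maxw_ge //; apply/flattenP; exists X.
exact: greedy_max_ic_spec (wle_total_preorder M) _ As_bd n_pos.
Qed.
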